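(* For every formula $A$ of $\mathbf{L_1}$, if $TA$ is valid in first-order predicate logic with equality, then it is not the case that $\dashv_H A$.
   Context: Formulas of $\mathbf{L_1}$: built from atomic formulas $\epsilon ab$ ($a,b$ name variables, possibly equal) with primitive connectives $\vee,\sim$; $\wedge,\supset,\equiv$ defined as usual. Disjunctions may be associated in any way. $\vdash_H A$: $A$ belongs to the smallest set containing all instances of classical propositional tautologies and all formulas $\epsilon ab\supset\epsilon aa$, $(\epsilon ab\wedge\epsilon bc)\supset\epsilon ac$, $(\epsilon ab\wedge\epsilon bb)\supset\epsilon ba$, closed under modus ponens. Positive/negative parts (occurrences): $A$ is a positive part of $A$; if $B\vee C$ is a positive part then $B,C$ are positive parts; if $\sim B$ is a positive part then $B$ is a negative part; if $\sim B$ is a negative part then $B$ is a positive part. $F[B_+,B_-]$ denotes a formula in which some $B$ has one occurrence as positive part and another non-overlapping occurrence as negative part. Hintikka formula: a formula $H$ such that (1) $H$ is not of the form $F[B_+,B_-]$; (2) if $B\vee C$ is a negative part of $H$ then $B$ or $C$ is; (3) if $\epsilon ab$ is a negative part then so is $\epsilon aa$; (4) if $\epsilon ab,\epsilon bc$ are negative parts then so is $\epsilon ac$; (5) if $\epsilon ab,\epsilon bb$ are negative parts then so is $\epsilon ba$. $\mathbf{HAR}$: fix a name variable $a_0$; $\dashv_H$ is the smallest set such that $\dashv_H\epsilon a_0a_0$; $\dashv_H\sim\epsilon a_0a_0$; if $\vdash_H A\supset B$ and $\dashv_H B$ then $\dashv_H A$; if $\dashv_H A$ and $A$ is obtained from $B$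 by uniform substitution of name variables for name variables then $\dashv_H B$; if $A$ is a Hintikka formula that is a disjunction of atomic or negated atomic formulas, $\dashv_H A$, and $\epsilon ab$ is not a negative part of $A$, then $\dashv_H A\vee\epsilon ab$. Translation $T$ into first-order logic with equality, with a monadic predicate $F_a$ for each name variable $a$: $T\epsilon ab=\exists x(F_ax\wedge F_bx)\wedge\forall x\forall y(F_ax\wedge F_ay\supset x=y)$; $T(A\vee B)=TA\vee TB$; $T(\sim A)=\sim TA$. Valid: true in every structure with nonempty domain and $=$ as identity. *)

From Stdlib Require Import List.
Import ListNotations.

Inductive formula : Type :=
| Eps : nat -> nat -> formula
| Or  : formula -> formula -> formula
| Neg : formula -> formula.

Definition And (A B : formula) : formula := Neg (Or (Neg A) (Neg B)).
Definition Imp (A B : formula) : formula := Or (Neg A) B.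
Definition Iff (A B : formula) : formula := And (Imp A B) (Imp B A).

Inductive pform : Type :=
| PVar : nat -> pform
| POr  : pform -> pform -> pform
| PNeg : pform -> pform.

Fixpoint peval (v : nat -> bool) (P : pform) : bool :=
  match P with
  | PVar n => v n
  | POr P Q => orb (peval v P) (peval v Q)
  | PNeg P => negb (peval v P)
  end.

Definition tautology (P : pform) : Prop := forall v, peval v P = true.

Fixpoint psubst (s : nat -> formula) (P : pform) : formula :=
  match P with
  | PVar n => s n
  | POr P Q => Or (psubst s P) (psubst s Q)
  | PNeg P => Neg (psubst s P)
  end.

Definition taut_instance (A : formula) : Prop :=
  exists (P : pform) (s : nat -> formula), tautology P /\ A = psubst s P.

Inductive provable : formula -> Prop :=
| pr_taut : forall A, taut_instance A -> provable A
| pr_ax1 : forall a b, provable (Imp (Eps a b) (Eps a a))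
| pr_ax2 : forall a b c, provable (Imp (And (Eps a b) (Eps b c)) (Eps a c))
| pr_ax3 : forall a b, provable (Imp (And (Eps a b) (Eps b b)) (Eps b a))
| pr_mp : forall A B, provable (Imp A B) -> provable A -> provable B.

Inductive dir : Type := DL | DR | DN.

(* [occ s A p s' X] : if A is a part of polarity s (true = positive),
   then the occurrence of X at path p inside A is a part of polarity s'. *)
Inductive occ : bool -> formula -> list dir -> bool -> formula -> Prop :=
| occ_here : forall s A, occ s A [] s A
| occ_orL : forall B C p s' X, occ true B p s' X -> occ true (Or B C) (DL :: p) s' X
| occ_orR : forall B C p s' X, occ true C p s' X -> occ true (Or B C) (DR :: p) s' X
| occ_neg : forall s B p s' X, occ (negb s) B p s' X -> occ s (Neg B) (DN :: p) s' X.

Definition pos_part_at (H : formula) (p : list dir) (X : formula) : Prop := occ true H p true X.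
Definition neg_part_at (H : formula) (p : list dir) (X : formula) : Prop := occ true H p false X.
Definition neg_part (H : formula) (X : formula) : Prop := exists p, neg_part_at H p X.

Definition is_prefix (p q : list dir) : Prop := exists r, q = p ++ r.
Definition non_overlapping (p q : list dir) : Prop := ~ is_prefix p q /\ ~ is_prefix q p.

(* H is of the form F[B+, B-] *)
Definition has_clash (H : formula) : Prop :=
  exists B p q, pos_part_at H p B /\ neg_part_at H q B /\ non_overlapping p q.

Definition hintikka (H : formula) : Prop :=
  ~ has_clash H /\
  (forall B C, neg_part H (Or B C) -> neg_part H B \/ neg_part H C) /\
  (forall a b, neg_part H (Eps a b) -> neg_part H (Eps a a)) /\
  (forall a b c, neg_part H (Eps a b) -> neg_part H (Eps b c) -> neg_part H (Eps a c)) /\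
  (forall a b, neg_part H (Eps a b) -> neg_part H (Eps b b) -> neg_part H (Eps b a)).

Inductive literal : formula -> Prop :=
| lit_pos : forall a b, literal (Eps a b)
| lit_neg : forall a b, literal (Neg (Eps a b)).

Inductive lit_disj : formula -> Prop :=
| ld_lit : forall A, literal A -> lit_disj A
| ld_or : forall A B, lit_disj A -> lit_disj B -> lit_disj (Or A B).

Fixpoint nsubst (s : nat -> nat) (A : formula) : formula :=
  match A with
  | Eps a b => Eps (s a) (s b)
  | Or A B => Or (nsubst s A) (nsubst s B)
  | Neg A => Neg (nsubst s A)
  end.

Inductive rejected (a0 : nat) : formula -> Prop :=
| rj_ax1 : rejected a0 (Eps a0 a0)
| rj_ax2 : rejected a0 (Neg (Eps a0 a0))
| rj_mp : forall A B, provable (Imp A B) -> rejected a0 B -> rejected a0 A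
| rj_subst : forall A B (s : nat -> nat), rejected a0 A -> A = nsubst s B -> rejected a0 B
| rj_ext : forall A a b, hintikka A -> lit_disj A -> rejected a0 A ->
    ~ neg_part A (Eps a b) -> rejected a0 (Or A (Eps a b)).

Inductive fol : Type :=
| FP   : nat -> nat -> fol          (* FP a x  =  F_a x *)
| FEq  : nat -> nat -> fol
| FOr  : fol -> fol -> fol
| FAnd : fol -> fol -> fol
| FImp : fol -> fol -> fol
| FNeg : fol -> fol
| FEx  : nat -> fol -> fol
| FAll : nat -> fol -> fol.

Definition upd {D : Type} (rho : nat -> D) (x : nat) (d : D) : nat -> D :=
  fun y => if Nat.eqb y x then d else rho y.

Fixpoint sat {D : Type} (I : nat -> D -> Prop) (rho : nat -> D) (phi : fol) : Prop :=
  match phi with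
  | FP a x => I a (rho x)
  | FEq x y => rho x = rho y
  | FOr p q => sat I rho p \/ sat I rho q
  | FAnd p q => sat I rho p /\ sat I rho q
  | FImp p q => sat I rho p -> sat I rho q
  | FNeg p => ~ sat I rho p
  | FEx x p => exists d : D, sat I (upd rho x d) p
  | FAll x p => forall d : D, sat I (upd rho x d) p
  end.

(* valid: true in every structure (nonempty domain D, = as identity) under
   every assignment; an assignment rho : nat -> D witnesses nonemptiness. *)
Definition valid (phi : fol) : Prop :=
  forall (D : Type) (I : nat -> D -> Prop) (rho : nat -> D), sat I rho phi.

(** * The translation T (object variables x = 0, y = 1) *)
Fixpoint T (A : formula) : fol :=
  match A with
  | Eps a b =>
      FAnd (FEx 0 (FAnd (FP a 0) (FP b 0)))
           (FAll 0 (FAll 1 (FImp (FAnd (FP a 0) (FP a 1)) (FEq 0 1))))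
  | Or A B => FOr (T A) (T B)
  | Neg A => FNeg (T A)
  end.

From Stdlib Require Import List Classical ClassicalEpsilon FunctionalExtensionality PropExtensionality.
Import ListNotations.

(* Theorem 6.1 is the soundness of the refutation system HAR with respect to
   the translation T: every rejected formula has a countermodel, i.e. a
   structure and assignment in which its translation is false.

   Taking R c d := "eps c d is a
     negative part of H" falsifies every literal disjunction occurring
     positively in a Hintikka formula H, and every atom that is not a
     negative part of H; this handles the extension rule of HAR.
   - Induction on rejection yields a countermodel for every rejected formula. *)

Definition eps_holds {D : Type} (I : nat -> D -> Prop) (a b : nat) : Prop :=
  (exists x, I a x /\ I b x) /\ (forall x y, I a x -> I a y -> x = y).

Lemma sat_T_eps {D : Type} (I : nat -> D -> Prop) (rho : nat -> D) (a b : nat) :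
  sat I rho (T (Eps a b)) <-> eps_holds I a b.
Proof.
  unfold eps_holds; cbn; unfold upd; cbn.
  split; intros [Hex Huniq]; split; auto;
    intros x y; specialize (Huniq x y); tauto.
Qed.

Lemma sat_T_imp {D : Type} (I : nat -> D -> Prop) (rho : nat -> D) (X Y : formula) :
  sat I rho (T (Imp X Y)) <-> (sat I rho (T X) -> sat I rho (T Y)).
Proof.
  cbn; split; [tauto|].
  intro HXY; destruct (classic (sat I rho (T X))); tauto.
Qed.

Lemma sat_T_and {D : Type} (I : nat -> D -> Prop) (rho : nat -> D) (X Y : formula) :
  sat I rho (T (And X Y)) <-> (sat I rho (T X) /\ sat I rho (T Y)).
Proof.
  cbn; split; [|tauto].
  intro HXY; destruct (classic (sat I rho (T X))), (classic (sat I rho (T Y))); tauto.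
Qed.

Lemma sat_T_psubst {D : Type} (I : nat -> D -> Prop) (rho : nat -> D)
    (s : nat -> formula) (P : pform) :
  sat I rho (T (psubst s P)) <->
  peval (fun n => if excluded_middle_informative (sat I rho (T (s n)))
                  then true else false) P = true.
Proof.
  induction P as [n | P1 IH1 P2 IH2 | P1 IH1]; cbn in *.
  - destruct excluded_middle_informative; split; intro; tauto || discriminate.
  - rewrite Bool.orb_true_iff; tauto.
  - rewrite Bool.negb_true_iff, IH1, Bool.not_true_iff_false; tauto.
Qed.

Lemma provable_sound (C : formula) :
  provable C -> forall (D : Type) (I : nat -> D -> Prop) (rho : nat -> D), sat I rho (T C).
Proof.
  induction 1 as [A [P [s [Htaut ->]]] | a b | a b c | a b | A B _ IHimp _ IHA];
    intros D I rho; try (apply sat_T_imp; try rewrite sat_T_and; rewrite !sat_T_eps;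
                         unfold eps_holds).
  - apply sat_T_psubst, Htaut.
  -
    intros [[x [Hax _]] Huniq]; eauto.
  - (* eps a b /\ eps b c -> eps a c: the element of F_a is that of F_b *)
    intros [[[x [Hax Hbx]] Ha1] [[y [Hby Hcy]] Hb1]].
    rewrite (Hb1 x y Hbx Hby) in Hax; eauto.
  -
    intros [[[x [Hax Hbx]] _] [_ Hb1]]; eauto.
  - exact (proj1 (sat_T_imp I rho A B) (IHimp D I rho) (IHA D I rho)).
Qed.

Lemma sat_T_nsubst {D : Type} (I : nat -> D -> Prop) (rho : nat -> D)
    (s : nat -> nat) (B : formula) :
  sat I rho (T (nsubst s B)) <-> sat (fun n => I (s n)) rho (T B).
Proof.
  induction B as [a b | B1 IH1 B2 IH2 | B1 IH1]; cbn in *; [tauto | rewrite IH1, IH2 | rewrite IH1];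
    tauto.
Qed.

Lemma occ_app (s : bool) (A : formula) (p r : list dir) (s1 s' : bool) (Y X : formula) :
  occ s A p s1 Y -> occ s1 Y r s' X -> occ s A (p ++ r) s' X.
Proof. induction 1; intros; cbn; try constructor; auto. Qed.

Lemma occ_split (s : bool) (A : formula) (p r : list dir) (s' : bool) (X : formula) :
  occ s A (p ++ r) s' X -> exists s1 Y, occ s A p s1 Y /\ occ s1 Y r s' X.
Proof.
  revert s A; induction p as [|d p IH]; intros s A Hocc; cbn in Hocc.
  - exists s, A; split; [constructor | auto].
  - inversion Hocc; subst;
      match goal with Hp : occ _ _ (p ++ r) _ _ |- _ =>
        destruct (IH _ _ Hp) as [s1 [Y [HY HX]]] end;
      exists s1, Y; split; auto; constructor; auto.
Qed.

Lemma occ_det (s : bool) (A : formula) (p : list dir) (s1 s2 : bool) (Y Z : formula) :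
  occ s A p s1 Y -> occ s A p s2 Z -> s1 = s2 /\ Y = Z.
Proof.
  intro HY; revert s2 Z; induction HY; intros s2 Z HZ; inversion HZ; subst; auto.
Qed.

(* An atom has no proper parts: any occurrence extending that of an atom is
   the atom itself, with the same polarity. *)
Lemma occ_atom_extension (s : bool) (A : formula) (p r : list dir) (s1 s2 : bool)
    (a b : nat) (X : formula) :
  occ s A p s1 (Eps a b) -> occ s A (p ++ r) s2 X -> s2 = s1.
Proof.
  intros Hatom Hext.
  destruct (occ_split _ _ _ _ _ _ Hext) as [s3 [Y [HY HX]]].
  destruct (occ_det _ _ _ _ _ _ _ Hatom HY) as [<- <-].
  inversion HX; auto.
Qed.

Lemma clash_free_pos_atom (H : formula) (p : list dir) (a b : nat) :
  ~ has_clash H -> pos_part_at H p (Eps a b) -> ~ neg_part H (Eps a b).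
Proof.
  intros Hnoclash Hpos [q Hneg].
  destruct (classic (is_prefix p q)) as [[r ->] | Hpq].
  { discriminate (occ_atom_extension _ _ _ _ _ _ _ _ _ Hpos Hneg). }
  destruct (classic (is_prefix q p)) as [[r ->] | Hqp].
  { discriminate (occ_atom_extension _ _ _ _ _ _ _ _ _ Hneg Hpos). }
  apply Hnoclash; exists (Eps a b), p, q; repeat split; auto.
Qed.

Section EpsModel.

(* R plays the role of "eps c d is a negative part": it satisfies the closure
   conditions (3)-(5) of Hintikka formulas. *)
Variable R : nat -> nat -> Prop.
Hypothesis R_refl_l : forall a b, R a b -> R a a.
Hypothesis R_trans : forall a b c, R a b -> R b c -> R a c.
Hypothesis R_sym : forall a b, R a b -> R b b -> R b a.

(* Each name c with R c c denotes the singleton of its class R c; every other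
   name denotes two private points, so that it denotes no individual. *)
Definition model_dom : Type := ((nat -> Prop) + (nat * bool))%type.

Definition model_pred (d : nat) (z : model_dom) : Prop :=
  match z with
  | inl k => exists c, R c c /\ k = R c /\ R c d
  | inr (e, _) => e = d /\ ~ R d d
  end.

Lemma model_pred_singleton (c : nat) (z : model_dom) :
  R c c -> model_pred c z -> z = inl (R c).
Proof.
  intros Rcc; destruct z as [k | [e t]]; cbn.
  - intros [c1 [Rc1 [-> Rc1c]]]; f_equal.
    assert (Rcc1 : R c c1) by auto.
    apply functional_extensionality; intro x; apply propositional_extensionality.
    split; eauto.
  - intros [_ Hn]; contradiction.
Qed.

Lemma model_eps (c d : nat) : eps_holds model_pred c d <-> R c d.
Proof.
  split.
  - intros [[x [Hcx Hdx]] Huniq].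
    assert (Rcc : R c c).
    { apply NNPP; intro Hn.
      assert (inr (c, true) = inr (c, false) :> model_dom) by (apply Huniq; cbn; auto).
      discriminate. }
    rewrite (model_pred_singleton c x Rcc Hcx) in Hdx.
    destruct Hdx as [c2 [Rc2 [Hcls Rc2d]]].
    assert (Rcc2 : R c c2) by (rewrite Hcls; exact Rc2).
    eauto.
  - intro Rcd; assert (Rcc : R c c) by eauto.
    split.
    + exists (inl (R c)); split; exists c; auto.
    + intros x y Hx Hy.
      rewrite (model_pred_singleton c x Rcc Hx), (model_pred_singleton c y Rcc Hy); auto.
Qed.

End EpsModel.

Section HintikkaCountermodel.

Variable H : formula.
Hypothesis H_hintikka : hintikka H.

Definition neg_atom (c d : nat) : Prop := neg_part H (Eps c d).

Definition hintikka_pred : nat -> model_dom -> Prop := model_pred neg_atom.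

Lemma hintikka_eps (c d : nat) : eps_holds hintikka_pred c d <-> neg_atom c d.
Proof.
  destruct H_hintikka as [_ [_ [Hrefl [Htrans Hsym]]]].
  apply model_eps; assumption.
Qed.

Lemma hintikka_pos_lit_disj_false (X : formula) :
  lit_disj X -> forall p, pos_part_at H p X ->
  forall rho, ~ sat hintikka_pred rho (T X).
Proof.
  induction 1 as [X [a b | a b] | X Y _ IHX _ IHY]; intros p Hp rho.
  - rewrite sat_T_eps, hintikka_eps.
    exact (clash_free_pos_atom H p a b (proj1 H_hintikka) Hp).
  - cbn; intro Hn; apply Hn.
    apply (sat_T_eps _ rho), hintikka_eps.
    exists (p ++ [DN]); eapply occ_app; [exact Hp | repeat constructor].
  - cbn; intros [HX | HY].
    + apply (IHX (p ++ [DL]) ltac:(eapply occ_app; [exact Hp | repeat constructor]) rho HX).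
    + apply (IHY (p ++ [DR]) ltac:(eapply occ_app; [exact Hp | repeat constructor]) rho HY).
Qed.

End HintikkaCountermodel.

Definition refutable (A : formula) : Prop :=
  exists (D : Type) (I : nat -> D -> Prop) (rho : nat -> D), ~ sat I rho (T A).

(* The side condition of the extension rule guarantees that the added atom is
   false in the Hintikka countermodel of A. *)
Lemma refutable_extension (A : formula) (a b : nat) :
  hintikka A -> lit_disj A -> ~ neg_part A (Eps a b) -> refutable (Or A (Eps a b)).
Proof.
  intros Hhint Hld Hnot.
  exists model_dom, (hintikka_pred A), (fun _ => inr (0, true)).
  intros [HA | Hab].
  - exact (hintikka_pos_lit_disj_false A Hhint A Hld [] (occ_here true A) _ HA).
  - apply Hnot, (hintikka_eps A Hhint), (proj1 (sat_T_eps _ _ _ _) Hab).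
Qed.

Lemma rejected_refutable (a0 : nat) (A : formula) : rejected a0 A -> refutable A.
Proof.
  induction 1 as [ | | A B Himp _ [D [I [rho HB]]] | A B s _ [D [I [rho HA]]] ->
                 | A a b Hhint Hld _ _ Hnot].
  - (* eps a0 a0 fails when every predicate is empty *)
    exists bool, (fun _ _ => False), (fun _ => true).
    rewrite sat_T_eps; intros [[x [[] _]] _].
  - (* eps a0 a0 holds in a one-point structure with full predicates *)
    exists unit, (fun _ _ => True), (fun _ => tt).
    assert (Htrue : eps_holds (fun (_ : nat) (_ : unit) => True) a0 a0).
    { split; [exists tt; auto | intros [] [] _ _; reflexivity]. }
    intro Hn; exact (Hn (proj2 (sat_T_eps _ (fun _ => tt) a0 a0) Htrue)).
  - (* a countermodel of B refutes A, since A -> B is true everywhere *)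
    exists D, I, rho; intro HA.
    exact (HB (proj1 (sat_T_imp I rho A B) (provable_sound _ Himp D I rho) HA)).
  - (* reindex the predicates of a countermodel of the instance *)
    exists D, (fun n => I (s n)), rho.
    rewrite <- sat_T_nsubst; exact HA.
  - exact (refutable_extension A a b Hhint Hld Hnot).
Qed.

Theorem theorem6p1 : forall (a0 : nat) (A : formula), valid (T A) -> ~ rejected a0 A.
Proof.
  intros a0 A Hvalid Hrej.
  destruct (rejected_refutable a0 A Hrej) as [D [I [rho Hfalse]]].
  exact (Hfalse (Hvalid D I rho)).
Qed.
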